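(* $\mathrm{HS}_{\mathsf{lin}}\not\geq\mathrm{HS}_{\mathsf{st}}$ and $\mathrm{HS}_{\mathsf{lin}}\not\geq\mathrm{HS}_{\mathsf{ct}}$: there is an $\mathrm{HS}$ formula $\psi$ such that no $\mathrm{HS}$ formula $\varphi$ satisfies, for every finite Kripke structure $K$, $K\models_{\mathsf{lin}}\varphi$ iff $K\models_{\mathsf{st}}\psi$; and there is an $\mathrm{HS}$ formula $\psi'$ such that no $\mathrm{HS}$ formula $\varphi$ satisfies, for every finite Kripke structure $K$, $K\models_{\mathsf{lin}}\varphi$ iff $K\models_{\mathsf{ct}}\psi'$.
   Context: A Kripke structure over a finite set $\mathcal{AP}$ is $K=(\mathcal{AP},S,\delta,\mu,s_0)$ with states $S$, left-total $\delta\subseteq S\times S$, labelling $\mu:S\to2^{\mathcal{AP}}$, initial state $s_0$; finite if $S$ is finite. Infinite paths are infinite state sequences following $\delta$; traces are their non-empty finite prefixes; initial means starting at $s_0$. For a finite word $w=w(0)\cdots w(n)$, $\mathrm{Pref}(w)=\{w[0,i]\mid0\le i\le n-1\}$, $\mathrm{Suff}(w)=\{w[i,n]\mid1\le i\le n\}$. The computation tree $C(K)$ has as states the initial traces of $K$, initial state $s_0$, labelling $\rho\mapsto\mu(\text{last state of }\rho)$, transitions $(\rho,\rho\cdot s)$. $\mathrm{HS}$ formulas: $\psi::=p\mid\neg\psi\mid\psi\wedge\psi\mid\langle X\rangle\psi$ for the Allen relations $A,L,B,E,D,O$ and inverses; all definable (non-strict semantics) from $\langle B\rangle,\langle E\rangle,\langle\bar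 B\rangle,\langle\bar E\rangle$. State-based semantics over traces: $\rho\models p$ iff $p\in\mu(s)$ for every state $s$ of $\rho$; $\langle B\rangle\psi$: some $\rho'\in\mathrm{Pref}(\rho)$ satisfies $\psi$; $\langle E\rangle\psi$: some $\rho'\in\mathrm{Suff}(\rho)$; $\langle\bar B\rangle\psi$: some trace $\rho'$ with $\rho\in\mathrm{Pref}(\rho')$; $\langle\bar E\rangle\psi$: some trace $\rho'$ with $\rho\in\mathrm{Suff}(\rho')$. $K\models_{\mathsf{st}}\psi$ iff every initial trace satisfies $\psi$; $K\models_{\mathsf{ct}}\psi$ iff $C(K)\models_{\mathsf{st}}\psi$. Trace-based: for an infinite path $\pi$, intervals $[i,j]$, $0\le i\le j$; $[i,j]\models p$ iff $p\in\mu(\pi(h))$ for all $i\le h\le j$; $[x,y]\models\langle B\rangle\psi$ iff $[x,z]\models\psi$ for some $x\le z<y$; $\langle E\rangle$: $[v,y]$ for some $x<v\le y$; $\langle\bar B\rangle$: $[x,z]$ for some $z>y$; $\langle\bar E\rangle$: $[v,y]$ for some $v<x$. $K\models_{\mathsf{lin}}\psi$ iff for every initial infinite path $\pi$ and $i\ge0$, $[0,i]\models\psi$ in $\pi$. *)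

From Stdlib Require Import List Arith Lia.
Import ListNotations.

(* K = (AP, S, delta, mu, s0) with delta left-total.  mu s a <-> a \in mu(s). *)
Record kripke (AP : Type) := Kripke {
  kS : Type;
  kdelta : kS -> kS -> Prop;
  kmu : kS -> AP -> Prop;
  ks0 : kS;
  ktotal : forall s, exists t, kdelta s t
}.
Arguments kS {AP}.
Arguments kdelta {AP}.
Arguments kmu {AP}.
Arguments ks0 {AP}.

Definition finite_kripke {AP : Type} (K : kripke AP) : Prop :=
  exists l : list (kS K), forall s, In s l.

Fixpoint is_path {S : Type} (d : S -> S -> Prop) (l : list S) : Prop :=
  match l with
  | [] => False
  | [_] => True
  | x :: ((y :: _) as t) => d x y /\ is_path d t
  end.

Definition is_trace {AP} (K : kripke AP) (rho : list (kS K)) : Prop :=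
  is_path (kdelta K) rho.

Definition is_initial_trace {AP} (K : kripke AP) (rho : list (kS K)) : Prop :=
  is_trace K rho /\ exists t, rho = ks0 K :: t.

Definition is_proper_prefix {S : Type} (rho' rho : list S) : Prop :=
  rho' <> [] /\ exists t, t <> [] /\ rho = rho' ++ t.

Definition is_proper_suffix {S : Type} (rho' rho : list S) : Prop :=
  rho' <> [] /\ exists t, t <> [] /\ rho = t ++ rho'.

(* All Allen modalities are definable (non-strict semantics) from
   <B>, <E>, <B-bar>, <E-bar>; we take these four as primitive. *)
Inductive formula (AP : Type) : Type :=
| Prop_ : AP -> formula AP
| Neg : formula AP -> formula AP
| And : formula AP -> formula AP -> formula AP
| DiaB : formula AP -> formula AP
| DiaE : formula AP -> formula AP
| DiaBbar : formula AP -> formula AP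
| DiaEbar : formula AP -> formula AP.
Arguments Prop_ {AP}. Arguments Neg {AP}. Arguments And {AP}.
Arguments DiaB {AP}. Arguments DiaE {AP}. Arguments DiaBbar {AP}. Arguments DiaEbar {AP}.

Fixpoint holds_st {AP} (K : kripke AP) (rho : list (kS K)) (f : formula AP) : Prop :=
  match f with
  | Prop_ p => forall s, In s rho -> kmu K s p
  | Neg g => ~ holds_st K rho g
  | And g h => holds_st K rho g /\ holds_st K rho h
  | DiaB g => exists rho', is_proper_prefix rho' rho /\ holds_st K rho' g
  | DiaE g => exists rho', is_proper_suffix rho' rho /\ holds_st K rho' g
  | DiaBbar g => exists rho', is_trace K rho' /\ is_proper_prefix rho rho' /\ holds_st K rho' g
  | DiaEbar g => exists rho', is_trace K rho' /\ is_proper_suffix rho rho' /\ holds_st K rho' g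
  end.

Definition models_st {AP} (K : kripke AP) (f : formula AP) : Prop :=
  forall rho, is_initial_trace K rho -> holds_st K rho f.

Lemma is_path_app_single {S : Type} (d : S -> S -> Prop) (l : list S) (x y : S) :
  is_path d (l ++ [x]) -> d x y -> is_path d (l ++ [x; y]).
Proof.
  induction l as [|a l IH]; simpl.
  - intros _ H; split; auto.
  - destruct l as [|b l]; simpl in *.
    + intros [H1 _] H; split; [exact H1| split; auto].
    + intros [H1 H2] H; split; [exact H1| apply IH; auto].
Qed.

Lemma is_path_snoc_total {AP} (K : kripke AP) (rho : list (kS K)) :
  is_trace K rho -> exists s, is_trace K (rho ++ [s]).
Proof.
  intros H. destruct (@exists_last _ rho) as [l [x E]].
  - intro E; subst; exact H.
  - subst rho. destruct (ktotal AP K x) as [y Hy]. exists y.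
    rewrite <- app_assoc. simpl. apply is_path_app_single; auto.
Qed.

Definition ct_state {AP} (K : kripke AP) : Type :=
  { rho : list (kS K) | is_initial_trace K rho }.

Definition ct_delta {AP} (K : kripke AP) (r r' : ct_state K) : Prop :=
  exists s, proj1_sig r' = proj1_sig r ++ [s].

Definition ct_mu {AP} (K : kripke AP) (r : ct_state K) (a : AP) : Prop :=
  kmu K (last (proj1_sig r) (ks0 K)) a.

Definition ct_root {AP} (K : kripke AP) : ct_state K.
Proof. exists [ks0 K]. split; [exact I | exists []; reflexivity]. Defined.

Lemma ct_total {AP} (K : kripke AP) : forall r, exists r', ct_delta K r r'.
Proof.
  intros [rho [Hp [t Ht]]].
  destruct (is_path_snoc_total K rho Hp) as [s Hs].
  assert (Hi : is_initial_trace K (rho ++ [s])).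
  { split; [exact Hs| exists (t ++ [s]); subst; reflexivity]. }
  exists (exist _ (rho ++ [s]) Hi). exists s. reflexivity.
Qed.

Definition comp_tree {AP} (K : kripke AP) : kripke AP :=
  @Kripke AP (ct_state K) (ct_delta K) (ct_mu K) (ct_root K) (ct_total K).

Definition models_ct {AP} (K : kripke AP) (f : formula AP) : Prop :=
  models_st (comp_tree K) f.

Definition is_initial_inf_path {AP} (K : kripke AP) (pi : nat -> kS K) : Prop :=
  pi 0 = ks0 K /\ forall i, kdelta K (pi i) (pi (S i)).

(* holds on the interval [i,j] (with i <= j) of pi *)
Fixpoint holds_lin {AP} (K : kripke AP) (pi : nat -> kS K) (i j : nat)
         (f : formula AP) : Prop :=
  match f with
  | Prop_ p => forall h, i <= h <= j -> kmu K (pi h) p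
  | Neg g => ~ holds_lin K pi i j g
  | And g h => holds_lin K pi i j g /\ holds_lin K pi i j h
  | DiaB g => exists z, i <= z < j /\ holds_lin K pi i z g
  | DiaE g => exists v, i < v <= j /\ holds_lin K pi v j g
  | DiaBbar g => exists z, j < z /\ holds_lin K pi i z g
  | DiaEbar g => exists v, v < i /\ holds_lin K pi v j g
  end.

Definition models_lin {AP} (K : kripke AP) (f : formula AP) : Prop :=
  forall pi, is_initial_inf_path K pi -> forall i, holds_lin K pi 0 i f.

(* The trace-based semantics only sees the labellings of the initial infinite
   paths: if every path labelling of K' also occurs in K, every HS_lin formula
   valid in K is valid in K'.  The state-based semantics can look backwards
   past the initial state: a fully labelled self-loop and a fully labelled
   lasso whose initial state has no predecessor have the same path labellings
   but differ on <Ebar> true.  The computation-tree semantics sees when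
   branching happens: a structure that branches into a p-loop and a non-p-loop
   after one step and one that branches at the root have the same path
   labellings, yet only in the computation tree of the first can every node of
   depth at most 1 be extended to a node ending in p. *)
From Stdlib Require Import List Lia.
Import ListNotations.

Lemma is_path_last_step {T : Type} (d : T -> T -> Prop) (l : list T) (x y : T) :
  is_path d (l ++ [x; y]) -> d x y.
Proof.
  induction l as [|a [|b l] IH]; cbn.
  - tauto.
  - tauto.
  - intros [_ H]; exact (IH H).
Qed.

Lemma is_path_invariant {T : Type} (d : T -> T -> Prop) (P : T -> Prop) :
  (forall x y, P x -> d x y -> P y) ->
  forall l x, is_path d (x :: l) -> P x -> forall y, In y (x :: l) -> P y.
Proof.
  intros HP l; induction l as [|z l IH]; intros x Hl Hx y Hy.
  - destruct Hy as [<-|[]]; exact Hx.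
  - destruct Hl as [Hxz Hl]; destruct Hy as [<-|Hy]; [exact Hx|].
    exact (IH z Hl (HP x z Hx Hxz) y Hy).
Qed.

Lemma inf_path_absorbed {T : Type} (d : T -> T -> Prop) (pi : nat -> T) (s : T) (k : nat) :
  (forall t, d s t -> t = s) -> (forall i, d (pi i) (pi (S i))) ->
  pi k = s -> forall n, pi (n + k) = s.
Proof.
  intros Hs Hd Hk n; induction n as [|n IH]; [exact Hk|].
  apply Hs; rewrite <- IH; apply Hd.
Qed.

Lemma proper_prefix_length {T : Type} (r' r : list T) :
  is_proper_prefix r' r -> 0 < length r' < length r.
Proof.
  intros [Hne [t [Ht ->]]]; rewrite length_app.
  destruct r'; [congruence|]; destruct t; [congruence|]; cbn; lia.
Qed.

Section HS.

Variable AP : Type.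

Definition Top (p : AP) : formula AP := Neg (And (Prop_ p) (Neg (Prop_ p))).

Definition Or (f g : formula AP) : formula AP := Neg (And (Neg f) (Neg g)).

Definition same_labelling {K1 K2 : kripke AP} (pi1 : nat -> kS K1) (pi2 : nat -> kS K2) : Prop :=
  forall h a, kmu K1 (pi1 h) a <-> kmu K2 (pi2 h) a.

Definition path_labellings_included (K1 K2 : kripke AP) : Prop :=
  forall pi1, is_initial_inf_path K1 pi1 ->
  exists pi2, is_initial_inf_path K2 pi2 /\ same_labelling pi1 pi2.

Lemma holds_lin_same_labelling (K1 K2 : kripke AP) (pi1 : nat -> kS K1) (pi2 : nat -> kS K2) :
  same_labelling pi1 pi2 ->
  forall f i j, holds_lin K1 pi1 i j f <-> holds_lin K2 pi2 i j f.
Proof.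
  intros Hl f; induction f as [a|g IH|g IHg h IHh|g IH|g IH|g IH|g IH]; intros i j; cbn.
  - split; intros Ha k Hk; apply Hl; auto.
  - rewrite IH; tauto.
  - rewrite IHg, IHh; tauto.
  - split; intros [z [Hz Hg]]; exists z; split; try apply IH; assumption.
  - split; intros [z [Hz Hg]]; exists z; split; try apply IH; assumption.
  - split; intros [z [Hz Hg]]; exists z; split; try apply IH; assumption.
  - split; intros [z [Hz Hg]]; exists z; split; try apply IH; assumption.
Qed.

Lemma models_lin_included (K1 K2 : kripke AP) (phi : formula AP) :
  path_labellings_included K2 K1 -> models_lin K1 phi -> models_lin K2 phi.
Proof.
  intros Hincl H1 pi2 Hpi2 i.
  destruct (Hincl pi2 Hpi2) as [pi1 [Hpi1 Hl]].
  apply (holds_lin_same_labelling _ _ pi2 pi1 Hl), H1, Hpi1.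
Qed.

Lemma not_lin_definable (sem : kripke AP -> formula AP -> Prop) (psi : formula AP)
  (K1 K2 : kripke AP) :
  finite_kripke K1 -> finite_kripke K2 -> path_labellings_included K2 K1 ->
  sem K1 psi -> ~ sem K2 psi ->
  ~ exists phi, forall K, finite_kripke K -> (models_lin K phi <-> sem K psi).
Proof.
  intros F1 F2 H21 S1 S2 [phi Hphi].
  apply S2, (Hphi K2 F2), (models_lin_included K1 K2 phi H21), (Hphi K1 F1), S1.
Qed.

Lemma holds_st_Top (K : kripke AP) (rho : list (kS K)) (p : AP) : holds_st K rho (Top p).
Proof. cbn; tauto. Qed.

Lemma holds_st_DiaB_DiaB_Top (K : kripke AP) (rho : list (kS K)) (p : AP) :
  holds_st K rho (DiaB (DiaB (Top p))) <-> 3 <= length rho.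
Proof.
  split.
  - intros [r' [Hr' [r'' [Hr'' _]]]].
    apply proper_prefix_length in Hr', Hr''; lia.
  - destruct rho as [|a [|b [|c t]]]; cbn; intros Hlen; try lia.
    exists [a; b]; split.
    + split; [discriminate|exists (c :: t); split; [discriminate|reflexivity]].
    + exists [a]; split; [|apply holds_st_Top].
      split; [discriminate|exists [b]; split; [discriminate|reflexivity]].
Qed.

Lemma holds_st_DiaE_Prop (K : kripke AP) (t : list (kS K)) (s : kS K) (p : AP) :
  t <> [] -> holds_st K (t ++ [s]) (DiaE (Prop_ p)) <-> kmu K s p.
Proof.
  intros Ht; split.
  - intros [r [[Hr [u [_ E]]] Hp]].
    destruct (exists_last Hr) as [r' [y ->]].
    rewrite app_assoc in E; apply app_inj_tail in E as [_ ->].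
    apply Hp, in_or_app; right; left; reflexivity.
  - intros Hs; exists [s]; split.
    + split; [discriminate|exists t; split; [exact Ht|reflexivity]].
    + intros y [<-|[]]; exact Hs.
Qed.

Lemma holds_st_DiaBbar_DiaE_Prop (K : kripke AP) (R : list (kS K)) (p : AP) :
  R <> [] ->
  holds_st K R (DiaBbar (DiaE (Prop_ p))) <->
  exists e s, is_trace K (R ++ e ++ [s]) /\ kmu K s p.
Proof.
  intros HR.
  assert (HRe : forall e : list (kS K), R ++ e <> []).
  { intros e E; apply app_eq_nil in E; tauto. }
  split.
  - intros [R' [Htr [[_ [ext [Hext ->]]] HE]]].
    destruct (exists_last Hext) as [e [s ->]].
    rewrite app_assoc in HE; apply holds_st_DiaE_Prop in HE; [|apply HRe].
    exists e, s; split; assumption.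
  - intros [e [s [Htr Hs]]]; exists (R ++ e ++ [s]); split; [exact Htr|split].
    + split; [exact HR|exists (e ++ [s]); split; [|reflexivity]].
      intro E; apply app_eq_nil in E; destruct E; discriminate.
    + rewrite app_assoc; apply holds_st_DiaE_Prop; [apply HRe|exact Hs].
Qed.

Lemma models_st_DiaEbar_Top (K : kripke AP) (p : AP) :
  models_st K (DiaEbar (Top p)) <-> exists u, kdelta K u (ks0 K).
Proof.
  split.
  - intros H.
    assert (Hinit : is_initial_trace K [ks0 K]) by (split; [exact I|exists []; reflexivity]).
    destruct (H _ Hinit) as [rho' [Htr [[_ [t [Ht ->]]] _]]].
    destruct (exists_last Ht) as [l [u ->]]; exists u.
    apply (is_path_last_step _ l); rewrite <- app_assoc in Htr; exact Htr.
  - intros [u Hu] rho [Htr [t ->]]; exists (u :: ks0 K :: t); split; [split; assumption|split].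
    + split; [discriminate|exists [u]; split; [discriminate|reflexivity]].
    + apply holds_st_Top.
Qed.

Definition ct_last {K : kripke AP} (r : ct_state K) : kS K := last (proj1_sig r) (ks0 K).

Lemma ct_delta_last (K : kripke AP) (r r' : ct_state K) :
  ct_delta K r r' -> kdelta K (ct_last r) (ct_last r').
Proof.
  destruct r as [rho [? [t Erho]]], r' as [rho' [Hrho' ?]]; intros [s Es]; cbn in Es.
  unfold ct_last; cbn [proj1_sig]; unfold is_trace in Hrho'; subst rho'.
  destruct (exists_last (l := rho) ltac:(subst rho; discriminate)) as [l [x ->]].
  rewrite !last_last; apply (is_path_last_step _ l).
  rewrite <- app_assoc in Hrho'; exact Hrho'.
Qed.

Lemma initial_trace_snoc (K : kripke AP) (rho : list (kS K)) (s : kS K) :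
  is_initial_trace K rho -> kdelta K (last rho (ks0 K)) s -> is_initial_trace K (rho ++ [s]).
Proof.
  intros [Htr [t ->]] Hs; split; [|exists (t ++ [s]); reflexivity].
  destruct (exists_last (l := ks0 K :: t) ltac:(discriminate)) as [l [x E]].
  rewrite E in Htr, Hs |- *; rewrite last_last in Hs; rewrite <- app_assoc.
  exact (is_path_app_single _ l x s Htr Hs).
Qed.

Definition ct_succ {K : kripke AP} (r : ct_state K) (s : kS K) (H : kdelta K (ct_last r) s) :
  ct_state K :=
  exist _ (proj1_sig r ++ [s]) (initial_trace_snoc K _ s (proj2_sig r) H).

Lemma ct_delta_succ (K : kripke AP) (r : ct_state K) (s : kS K) (H : kdelta K (ct_last r) s) :
  ct_delta K r (ct_succ r s H).
Proof. exists s; reflexivity. Qed.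

Lemma ct_last_succ (K : kripke AP) (r : ct_state K) (s : kS K) (H : kdelta K (ct_last r) s) :
  ct_last (ct_succ r s H) = s.
Proof. apply last_last. Qed.

Definition loop_kripke : kripke AP :=
  @Kripke AP unit (fun _ _ => True) (fun _ _ => True) tt (fun _ => ex_intro _ tt I).

Definition lasso_kripke : kripke AP :=
  @Kripke AP bool (fun _ y => y = false) (fun _ _ => True) true
    (fun _ => ex_intro _ false eq_refl).

Lemma lasso_loop_included : path_labellings_included lasso_kripke loop_kripke.
Proof.
  intros pi _; exists (fun _ => tt); split; [split; [reflexivity|intros; exact I]|].
  intros h a; cbn; tauto.
Qed.

Lemma loop_models_st (p : AP) : models_st loop_kripke (DiaEbar (Top p)).
Proof. apply models_st_DiaEbar_Top; exists tt; exact I. Qed.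

Lemma lasso_not_models_st (p : AP) : ~ models_st lasso_kripke (DiaEbar (Top p)).
Proof. rewrite models_st_DiaEbar_Top; intros [u Hu]; discriminate Hu. Qed.

Inductive late_state := Lroot | Lmid | Lhit | Lmiss.

Definition late_delta (u v : late_state) : Prop :=
  match u, v with
  | Lroot, Lmid | Lmid, Lhit | Lmid, Lmiss | Lhit, Lhit | Lmiss, Lmiss => True
  | _, _ => False
  end.

Lemma late_delta_total (u : late_state) : exists v, late_delta u v.
Proof. destruct u; [exists Lmid|exists Lhit|exists Lhit|exists Lmiss]; exact I. Qed.

Definition late_branching : kripke AP :=
  @Kripke AP late_state late_delta (fun u _ => u = Lhit) Lroot late_delta_total.

Inductive early_state := Eroot | Emid | Ehit | Emiss.

Definition early_delta (u v : early_state) : Prop :=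
  match u, v with
  | Eroot, Emid | Eroot, Emiss | Emid, Ehit | Ehit, Ehit | Emiss, Emiss => True
  | _, _ => False
  end.

Lemma early_delta_total (u : early_state) : exists v, early_delta u v.
Proof. destruct u; [exists Emid|exists Ehit|exists Ehit|exists Emiss]; exact I. Qed.

Definition early_branching : kripke AP :=
  @Kripke AP early_state early_delta (fun u _ => u = Ehit) Eroot early_delta_total.

Definition late_path (b : bool) (n : nat) : late_state :=
  match n with 0 => Lroot | 1 => Lmid | _ => if b then Lhit else Lmiss end.

Definition early_path (b : bool) (n : nat) : early_state :=
  match n with
  | 0 => Eroot
  | 1 => if b then Emid else Emiss
  | _ => if b then Ehit else Emiss
  end.

Lemma late_path_initial (b : bool) : is_initial_inf_path late_branching (late_path b).
Proof. split; [reflexivity|]; intros [|[|i]]; destruct b; exact I. Qed.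

Lemma early_late_path_labels (b : bool) (h : nat) (a : AP) :
  kmu early_branching (early_path b h) a <-> kmu late_branching (late_path b h) a.
Proof. destruct h as [|[|h]], b; cbn; split; intro; (discriminate || reflexivity). Qed.

Lemma early_branching_paths (pi : nat -> early_state) :
  is_initial_inf_path early_branching pi -> exists b, forall n, pi n = early_path b n.
Proof.
  intros [H0 Hd]; cbn in H0, Hd.
  assert (Habs : forall s, s = Ehit \/ s = Emiss -> forall t, early_delta s t -> t = s).
  { intros s [-> | ->] []; cbn; tauto. }
  generalize (Hd 0); rewrite H0; destruct (pi 1) eqn:E1; cbn; try tauto; intros _.
  - assert (E2 : pi 2 = Ehit).
    { generalize (Hd 1); rewrite E1; destruct (pi 2); cbn; tauto. }
    exists true; intros [|[|n]]; cbn; try assumption.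
    replace (S (S n)) with (n + 2) by lia.
    apply (inf_path_absorbed early_delta pi _ 2); [apply Habs; auto|exact Hd|exact E2].
  - exists false; intros [|[|n]]; cbn; try assumption.
    replace (S (S n)) with (S n + 1) by lia.
    apply (inf_path_absorbed early_delta pi _ 1); [apply Habs; auto|exact Hd|exact E1].
Qed.

Lemma early_late_included : path_labellings_included early_branching late_branching.
Proof.
  intros pi Hpi; destruct (early_branching_paths pi Hpi) as [b Hb].
  exists (late_path b); split; [apply late_path_initial|].
  intros h a; rewrite Hb; apply early_late_path_labels.
Qed.

Lemma late_models_ct (p : AP) :
  models_ct late_branching (Or (DiaB (DiaB (Top p))) (DiaBbar (DiaE (Prop_ p)))).
Proof.
  set (root := ks0 (comp_tree late_branching)).
  intros R [HR [t ->]] [Hshort Hstuck].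
  destruct t as [|r1 [|r2 t]].
  - apply Hstuck, holds_st_DiaBbar_DiaE_Prop; [discriminate|].
    pose (r1 := ct_succ root Lmid I).
    assert (Hr1 : late_delta (ct_last r1) Lhit) by exact I.
    exists [r1], (ct_succ r1 Lhit Hr1); split; [|exact (ct_last_succ _ r1 Lhit Hr1)].
    repeat split; apply ct_delta_succ.
  - apply Hstuck, holds_st_DiaBbar_DiaE_Prop; [discriminate|].
    destruct HR as [Hr1 _].
    assert (E1 : ct_last r1 = Lmid).
    { generalize (ct_delta_last _ _ _ Hr1); cbn; destruct (ct_last r1); tauto. }
    assert (Hr1' : late_delta (ct_last r1) Lhit) by (rewrite E1; exact I).
    exists [], (ct_succ r1 Lhit Hr1'); split; [|exact (ct_last_succ _ r1 Lhit Hr1')].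
    split; [exact Hr1|split; [apply ct_delta_succ|exact I]].
  - apply Hshort, holds_st_DiaB_DiaB_Top; cbn; lia.
Qed.

Lemma early_not_models_ct (p : AP) :
  ~ models_ct early_branching (Or (DiaB (DiaB (Top p))) (DiaBbar (DiaE (Prop_ p)))).
Proof.
  set (root := ks0 (comp_tree early_branching)).
  set (c := ct_succ root Emiss I).
  assert (Hinit : is_initial_trace (comp_tree early_branching) [root; c]).
  { split; [split; [apply ct_delta_succ|exact I]|exists [c]; reflexivity]. }
  intros H; apply (H _ Hinit); split.
  - intros Hlong; apply holds_st_DiaB_DiaB_Top in Hlong; cbn in Hlong; lia.
  - intros Hext; apply holds_st_DiaBbar_DiaE_Prop in Hext as [e [s [[_ Htr] Hs]]];
      [|discriminate].
    assert (Hmiss : ct_last s = Emiss).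
    { refine (is_path_invariant (ct_delta early_branching) (fun r => ct_last r = Emiss)
                _ (e ++ [s]) c Htr (ct_last_succ _ root Emiss I) s _).
      - intros x y Hx Hxy; generalize (ct_delta_last _ _ _ Hxy); rewrite Hx.
        cbn; destruct (ct_last y); tauto.
      - right; apply in_or_app; right; left; reflexivity. }
    change (ct_last s = Ehit) in Hs; congruence.
Qed.

End HS.

Theorem proposition5p3 (AP : Type)
  (HAPfin : exists l : list AP, forall a, In a l)
  (HAPne : inhabited AP) :
  (exists psi : formula AP, ~ exists phi : formula AP,
     forall K : kripke AP, finite_kripke K ->
       (models_lin K phi <-> models_st K psi))
  /\
  (exists psi' : formula AP, ~ exists phi : formula AP,
     forall K : kripke AP, finite_kripke K ->
       (models_lin K phi <-> models_ct K psi')).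
Proof.
  destruct HAPne as [p]; split.
  - exists (DiaEbar (Top AP p)).
    apply (not_lin_definable AP _ _ (loop_kripke AP) (lasso_kripke AP)).
    + exists [tt]; intros []; cbn; auto.
    + exists [true; false]; intros []; cbn; auto.
    + apply lasso_loop_included.
    + apply loop_models_st.
    + apply lasso_not_models_st.
  - exists (Or AP (DiaB (DiaB (Top AP p))) (DiaBbar (DiaE (Prop_ p)))).
    apply (not_lin_definable AP _ _ (late_branching AP) (early_branching AP)).
    + exists [Lroot; Lmid; Lhit; Lmiss]; intros []; cbn; auto.
    + exists [Eroot; Emid; Ehit; Emiss]; intros []; cbn; auto.
    + apply early_late_included.
    + apply late_models_ct.
    + apply early_not_models_ct.
Qed.
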